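(* Let $m,n\ge 1$, $k=\min(m,n)$, and let $M^\star\in\mathbb{R}^{m\times n}$ have singular value decomposition $M^\star=P\Sigma Q^\top$ with $P\in\mathbb{R}^{m\times k}$, $Q\in\mathbb{R}^{n\times k}$ having orthonormal columns $p_i,q_i$ and $\Sigma=\mathrm{diag}(\sigma_1,\dots,\sigma_k)$ with $\sigma_1>\sigma_2>\cdots>\sigma_k>0$. For $r\in\{1,\dots,k\}$ let $A_r=\sum_{i=1}^r\sigma_i p_iq_i^\top$. For $U\in\mathbb{R}^{m\times k}$, $V\in\mathbb{R}^{n\times k}$ define $$\mathcal{E}(U,V,r)=\min_{S_r\subseteq\{1,\dots,k\},\,|S_r|=r}\bigl\|U\Pi_{S_r}V^\top-A_r\bigr\|_F^2,$$ where $\Pi_{S}$ is the $k\times k$ diagonal matrix with $(\Pi_S)_{ii}=1$ if $i\in S$ and $0$ otherwise. Let $\mathcal{M}=\{(U,V)\in\mathbb{R}^{m\times k}\times\mathbb{R}^{n\times k}: UV^\top=M^\star\}$ be the set of global minimizers of $\mathcal{L}_{PTS}(U,V)=\|UV^\top-M^\star\|_F^2$. Then for each $r<k$, the set $\mathcal{M}_r=\{(U,V)\in\mathcal{M}:\mathcal{E}(U,V,r)=0\}$ has Lebesgue measure zero relative to $\mathcal{M}$.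
   Context: $\|\cdot\|_F$ denotes the Frobenius norm. $A_r$ is the (unique) best rank-$r$ approximation of $M^\star$ (truncated SVD). *)

From HB Require Import structures.
From mathcomp Require Import all_boot all_order all_algebra.
From mathcomp Require Import reals.
Set Implicit Arguments. Unset Strict Implicit. Unset Printing Implicit Defensive.
Import Order.TTheory GRing.Theory Num.Theory.
Local Open Scope ring_scope.

Definition frob2 (R : numDomainType) (m n : nat) (A : 'M[R]_(m, n)) : R :=
  \sum_(i < m) \sum_(j < n) A i j ^+ 2.

Definition PiS (R : numDomainType) (k : nat) (S : {set 'I_k}) : 'M[R]_k :=
  diag_mx (\row_i (i \in S)%:R).

(* A_r = sum_{i <= r} sigma_i p_i q_i^T  (0-based indices i < r) *)
Definition Ar (R : numDomainType) (m n k : nat) (P : 'M[R]_(m, k))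
  (sigma : 'rV[R]_k) (Q : 'M[R]_(n, k)) (r : nat) : 'M[R]_(m, n) :=
  \sum_(i < k | (i < r)%N) sigma 0 i *: (col i P *m (col i Q)^T).

(* E(U,V,r) = min over S subset of {1..k}, |S| = r, of ||U Pi_S V^T - A_r||_F^2.
   The min is written as a big Num.min seeded with the value at {0,..,r-1},
   which is one of the candidates (when r <= k). *)
Definition Eerr (R : realDomainType) (m n k : nat) (P : 'M[R]_(m, k))
  (sigma : 'rV[R]_k) (Q : 'M[R]_(n, k)) (r : nat)
  (U : 'M[R]_(m, k)) (V : 'M[R]_(n, k)) : R :=
  let F := fun S : {set 'I_k} => frob2 (U *m PiS R S *m V^T - Ar P sigma Q r) in
  \big[Num.min/F [set i : 'I_k | (i < r)%N]]_(S : {set 'I_k} | #|S| == r) F S.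

Definition Mset (R : numDomainType) (m n k : nat) (Mstar : 'M[R]_(m, n))
  (U : 'M[R]_(m, k)) (V : 'M[R]_(n, k)) : Prop := U *m V^T = Mstar.

Definition Mr (R : realDomainType) (m n k : nat) (Mstar : 'M[R]_(m, n))
  (P : 'M[R]_(m, k)) (sigma : 'rV[R]_k) (Q : 'M[R]_(n, k)) (r : nat)
  (U : 'M[R]_(m, k)) (V : 'M[R]_(n, k)) : Prop :=
  Mset Mstar U V /\ Eerr P sigma Q r U V = 0.

(* Lebesgue null sets in R^(p x q): coverable by countably many closed boxes
   of arbitrarily small total volume. *)
Definition box_vol (R : numDomainType) (p q : nat) (a b : 'M[R]_(p, q)) : R :=
  \prod_(i < p) \prod_(j < q) (b i j - a i j).

Definition lebesgue_null (R : realType) (p q : nat) (S : 'M[R]_(p, q) -> Prop)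
  : Prop :=
  forall eps : R, 0 < eps ->
  exists a b : nat -> 'M[R]_(p, q),
    (forall t i j, a t i j <= b t i j) /\
    (forall x, S x -> exists t, forall i j, a t i j <= x i j <= b t i j) /\
    (forall N, \sum_(t < N) box_vol (a t) (b t) <= eps).

(** The global minimizers of [(U, V) |-> ||U V^T - P Sigma Q^T||_F^2] are exactly the pairs
    [(P Sigma G, Q G^-T)] with [G] invertible: [G := Sigma^-1 P^T U] is a one-sided, hence
    two-sided, inverse of [V^T Q]. For such a pair [U Pi_S V^T = P Sigma G Pi_S G^-1 Q^T], so
    [E(U, V, r) = 0] forces [Sigma G Pi_S = Sigma_r G] for some [S] with [|S| = r < k]; reading
    row [0] (which lies in [A_r] since [r >= 1]) at a column [j] outside [S] gives [G 0 j = 0].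
    Hence the parameters of [M_r] lie in finitely many coordinate hyperplanes of [R^(k x k)],
    which are covered by thin boxes of geometrically decreasing volume. *)
From HB Require Import structures.
From mathcomp Require Import all_boot all_order all_algebra.
From mathcomp Require Import reals.
From mathcomp Require Import lra ring.
Set Implicit Arguments. Unset Strict Implicit. Unset Printing Implicit Defensive.
Import Order.TTheory GRing.Theory Num.Theory.
Local Open Scope ring_scope.

Section Factorization.

Variables (R : comUnitRingType) (m n k : nat).
Variables (P : 'M[R]_(m, k)) (Q : 'M[R]_(n, k)).
Hypotheses (hP : P^T *m P = 1%:M) (hQ : Q^T *m Q = 1%:M).

Lemma mulmx_tr_factorP (D : 'M[R]_k) (U : 'M[R]_(m, k)) (V : 'M[R]_(n, k)) :
  D \in unitmx ->
  U *m V^T = P *m D *m Q^T <->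
  exists G : 'M[R]_k, G \in unitmx /\ U = P *m D *m G /\ V = Q *m (invmx G)^T.
Proof.
move=> uD; split; last first.
  by move=> [G [uG [-> ->]]]; rewrite trmx_mul trmxK mulmxA mulmxK.
move=> hUV; pose G := invmx D *m P^T *m U.
have GVt : G *m V^T = Q^T.
  by rewrite -mulmxA hUV !mulmxA -(mulmxA _ P^T) hP mulmx1 mulVmx ?mul1mx.
have GW : G *m (V^T *m Q) = 1%:M by rewrite mulmxA GVt hQ.
have [uG _] := mulmx1_unit GW.
exists G; split => //; split.
  have UW : U *m (V^T *m Q) = P *m D by rewrite mulmxA hUV -mulmxA hQ mulmx1.
  by rewrite -[U]mulmx1 -(mulmx1C GW) mulmxA UW.
have Vt : V^T = invmx G *m Q^T by rewrite -GVt mulKmx.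
by rewrite -[V]trmxK Vt trmx_mul trmxK.
Qed.

Lemma mulmx_ortho_tr_inj : injective (fun Y : 'M[R]_k => P *m Y *m Q^T).
Proof.
have PYQ Y : P^T *m (P *m Y *m Q^T) *m Q = Y.
  by rewrite mulmxA (mulmxA P^T) hP mul1mx -mulmxA hQ mulmx1.
by move=> Y1 Y2 /= eqY; rewrite -(PYQ Y1) eqY PYQ.
Qed.

End Factorization.

Lemma frob2_eq0 (R : realDomainType) p q (A : 'M[R]_(p, q)) : frob2 A = 0 -> A = 0.
Proof.
move=> A0; apply/matrixP => i j; rewrite mxE.
have rows0 := psumr_eq0P (fun i _ => sumr_ge0 _ (fun j _ => sqr_ge0 (A i j))) A0.
have /eqP : A i j ^+ 2 = 0 by apply: (psumr_eq0P _ (rows0 i isT)) => // ? _; exact: sqr_ge0.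
by rewrite sqrf_eq0 => /eqP.
Qed.

Lemma notin_set_card_lt (T : finType) (S : {set T}) :
  (#|S| < #|T|)%N -> exists x, x \notin S.
Proof.
rewrite -(cardsC S) -{1}[#|S|]addn0 ltn_add2l card_gt0 => /set0Pn [x].
by rewrite in_setC => xS; exists x.
Qed.

Lemma Eerr_eq0 (R : realDomainType) m n k (P : 'M[R]_(m, k)) (sigma : 'rV[R]_k)
  (Q : 'M[R]_(n, k)) r (U : 'M[R]_(m, k)) (V : 'M[R]_(n, k)) :
  (r < k)%N -> Eerr P sigma Q r U V = 0 ->
  exists j, exists2 S : {set 'I_k}, j \notin S & U *m PiS R S *m V^T = Ar P sigma Q r.
Proof.
move=> rk; rewrite /Eerr /=; set claim := (exists j, _).
apply: (big_ind (fun x => x = 0 -> claim)) => [|x y Kx Ky|S /eqP cS].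
- move/frob2_eq0/eqP; rewrite subr_eq0 => /eqP.
  by exists (Ordinal rk), [set i : 'I_k | (i < r)%N]; rewrite ?inE ?ltnn.
- by rewrite /Num.min; case: ifP.
- have [j jS] : exists j, j \notin S by apply: notin_set_card_lt; rewrite card_ord cS.
  by move/frob2_eq0/eqP; rewrite subr_eq0 => /eqP; exists j, S.
Qed.

Lemma Ar_diagE (R : numDomainType) m n k (P : 'M[R]_(m, k)) (sigma : 'rV[R]_k)
  (Q : 'M[R]_(n, k)) r :
  Ar P sigma Q r = P *m diag_mx (\row_i (sigma 0 i * (i < r)%N%:R)) *m Q^T.
Proof.
apply/matrixP => a b.
rewrite /Ar summxE mul_mx_diag !mxE big_mkcond /=.
apply: eq_bigr => c _; rewrite !mxE big_ord1 !mxE.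
by case: ifP => _; rewrite ?mulr1 ?mulr0 ?mul0r //; ring.
Qed.

Lemma Mr_row_has_zero (R : realDomainType) m n k (Mstar : 'M[R]_(m, n))
  (P : 'M[R]_(m, k)) (Q : 'M[R]_(n, k)) (sigma : 'rV[R]_k) r (G : 'M[R]_k) (i0 : 'I_k) :
  P^T *m P = 1%:M -> Q^T *m Q = 1%:M -> (r < k)%N -> (i0 < r)%N -> sigma 0 i0 != 0 ->
  G \in unitmx ->
  Mr Mstar P sigma Q r (P *m diag_mx sigma *m G) (Q *m (invmx G)^T) ->
  exists j, G i0 j = 0.
Proof.
move=> hP hQ rk i0r si0 uG [_ /(Eerr_eq0 rk) [j [S jS]]].
rewrite Ar_diagE trmx_mul trmxK => USV.
have : P *m (diag_mx sigma *m G *m PiS R S *m invmx G) *m Q^T =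
       P *m diag_mx (\row_i (sigma 0 i * (i < r)%:R)) *m Q^T.
  by rewrite -USV !mulmxA.
move/(mulmx_ortho_tr_inj hP hQ)/(congr1 (fun X => (X *m G) i0 j)).
rewrite /= mulmxKV // /PiS mul_mx_diag mul_diag_mx !mxE (negbTE jS) i0r mulr0 mulr1.
by move/esym/eqP; rewrite mulf_eq0 (negbTE si0) => /eqP; exists j.
Qed.

Lemma sum_geometric_halves (R : realFieldType) (eps : R) N :
  \sum_(t < N) eps / 2 ^+ t.+1 = eps - eps / 2 ^+ N.
Proof.
elim: N => [|N IH]; first by rewrite big_ord0 expr0 divr1 subrr.
rewrite big_ord_recr /= IH exprS.
have pow2_gt0 : (0 < 2 ^+ N :> R) by apply: exprn_gt0.
by field; rewrite gt_eqF.
Qed.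

Lemma le_norm_entry_sum (R : realDomainType) p q (x : 'M[R]_(p, q)) i j :
  `|x i j| <= \sum_i \sum_j `|x i j|.
Proof.
rewrite (bigD1 i) //= (bigD1 j) //= -addrA lerDl.
by apply: addr_ge0; apply: sumr_ge0 => *; rewrite ?sumr_ge0.
Qed.

Section NullSets.

Variables (R : realType) (p q : nat).

Lemma lebesgue_null_sub (A B : 'M[R]_(p, q) -> Prop) :
  (forall x, A x -> B x) -> lebesgue_null B -> lebesgue_null A.
Proof.
move=> AB nullB eps eps0; have [a [b [ab [coverB volB]]]] := nullB eps eps0.
by exists a, b; split; [|split] => // x /AB /coverB.
Qed.

Lemma lebesgue_null_halves (S : 'M[R]_(p, q) -> Prop) :
  (forall eps : R, 0 < eps -> exists a b : nat -> 'M[R]_(p, q),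
     [/\ forall t i j, a t i j <= b t i j,
         forall x, S x -> exists t, forall i j, a t i j <= x i j <= b t i j
       & forall t, box_vol (a t) (b t) <= eps / 2 ^+ t.+1]) ->
  lebesgue_null S.
Proof.
move=> halves eps eps0; have [a [b [ab coverS volS]]] := halves eps eps0.
exists a, b; split; [|split] => // N; apply: le_trans (ler_sum _ (fun (t : 'I_N) _ => volS t)) _.
rewrite sum_geometric_halves gerBl; apply: divr_ge0; [exact: ltW | exact: exprn_ge0].
Qed.

Definition slab_radius (c d : R) (i0 : 'I_p) (j0 : 'I_q) : 'M[R]_(p, q) :=
  \matrix_(i, j) if (i == i0) && (j == j0) then d else c.

Lemma box_vol_slab (c d : R) i0 j0 : 1 <= c -> 0 <= d ->
  box_vol (- slab_radius c d i0 j0) (slab_radius c d i0 j0) <= d *+ 2 * (c *+ 2) ^+ (p * q).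
Proof.
move=> c1 d0; rewrite /box_vol pair_big /= (bigD1 (i0, j0)) //= !mxE !eqxx /=.
rewrite (eq_bigr (fun _ => c *+ 2)); last first.
  move=> [i j] /= ij_ne; rewrite !mxE; case: ifP => [/andP [/eqP ei /eqP ej]|_].
    by move: ij_ne; rewrite ei ej eqxx.
  by rewrite opprK -mulr2n.
rewrite opprK -mulr2n prodr_const; apply: ler_wpM2l; first by rewrite mulrn_wge0.
apply: ler_weXn2l; first by rewrite mulr2n; lra.
by apply: leq_trans (max_card _) _; rewrite card_prod !card_ord.
Qed.

Lemma lebesgue_null_row_has_zero (i0 : 'I_p) : (0 < q)%N ->
  lebesgue_null (fun x : 'M[R]_(p, q) => exists j, x i0 j = 0).
Proof.
move=> q_gt0; apply: lebesgue_null_halves => eps eps0.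
pose c t : R := t.+1%:R.
pose d t := eps / (2 ^+ t.+2 * (c t *+ 2) ^+ (p * q)).
pose j_ t : 'I_q := Ordinal (ltn_pmod t q_gt0).
pose B t := slab_radius (c t) (d t) i0 (j_ t).
have c1 t : 1 <= c t by rewrite ler1n.
have d0 t : 0 <= d t.
  apply: divr_ge0; first exact: ltW.
  by apply: mulr_ge0; apply: exprn_ge0; rewrite // mulr2n; have := c1 t; lra.
have B0 t i j : 0 <= B t i j by rewrite mxE; case: ifP => _; [exact: d0 | have := c1 t; lra].
exists (fun t => - B t), B; split.
- by move=> t i j; rewrite mxE; have := B0 t i j; lra.
- move=> x [j0 xj0]; pose L := Num.bound (\sum_i \sum_j `|x i j|).
  exists (j0 + q * L)%N => i j; rewrite mxE -ler_norml mxE.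
  have -> : j_ (j0 + q * L)%N = j0.
    by apply: val_inj; rewrite /= addnC mulnC modnMDl modn_small.
  case: ifP => [/andP [/eqP -> /eqP ->]|_]; first by rewrite xj0 normr0.
  apply: le_trans (le_norm_entry_sum x i j) _; apply/ltW/(lt_le_trans (archi_boundP _)).
    by apply: sumr_ge0 => *; apply: sumr_ge0.
  by rewrite ler_nat; apply/leqW/(leq_trans (leq_pmull L q_gt0))/leq_addl.
- move=> t; apply: le_trans (box_vol_slab _ _ (c1 t) (d0 t)) _.
  have vol_gt0 : 0 < (c t *+ 2) ^+ (p * q) by apply: exprn_gt0; have := c1 t; lra.
  have pow2_gt0 : 0 < 2 ^+ t :> R by apply: exprn_gt0.
  suff -> : d t *+ 2 * (c t *+ 2) ^+ (p * q) = eps / 2 ^+ t.+1 by exact: lexx.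
  move: vol_gt0; rewrite /d; set z := _ ^+ (p * q) => z_gt0.
  by rewrite !exprS mulr2n; field; rewrite !gt_eqF.
Qed.

End NullSets.

Theorem theorem4p1 (R : realType) (m n k : nat)
  (hm : (1 <= m)%N) (hn : (1 <= n)%N) (hk : k = minn m n)
  (Mstar : 'M[R]_(m, n)) (P : 'M[R]_(m, k)) (Q : 'M[R]_(n, k))
  (sigma : 'rV[R]_k)
  (hP : P^T *m P = 1%:M) (hQ : Q^T *m Q = 1%:M)
  (hdec : forall i j : 'I_k, (i < j)%N -> sigma 0 j < sigma 0 i)
  (hpos : forall i : 'I_k, 0 < sigma 0 i)
  (hsvd : Mstar = P *m diag_mx sigma *m Q^T)
  (r : nat) (hr1 : (1 <= r)%N) (hr : (r < k)%N) :
  (* the map G |-> (P Sigma G, Q G^{-T}) on GL_k parametrizes M ... *)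
  (forall (U : 'M[R]_(m, k)) (V : 'M[R]_(n, k)),
      Mset Mstar U V <->
      exists G : 'M[R]_k, G \in unitmx /\
        U = P *m diag_mx sigma *m G /\ V = Q *m (invmx G)^T)
  /\
  (* ... and the preimage of M_r under it is Lebesgue-null in R^(k x k) *)
  lebesgue_null (fun G : 'M[R]_k =>
     G \in unitmx /\
     Mr Mstar P sigma Q r (P *m diag_mx sigma *m G) (Q *m (invmx G)^T)).
Proof.
have uSigma : diag_mx sigma \in unitmx.
  by rewrite unitmxE det_diag unitfE; apply/prodf_neq0 => i _; rewrite gt_eqF.
split=> [U V|]; first by rewrite /Mset hsvd; exact: mulmx_tr_factorP.
have k_gt0 : (0 < k)%N by apply: leq_ltn_trans hr.
apply: lebesgue_null_sub (lebesgue_null_row_has_zero (Ordinal k_gt0) k_gt0).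
move=> G [uG MrG].
exact: (Mr_row_has_zero (i0 := Ordinal k_gt0) hP hQ hr hr1 (lt0r_neq0 (hpos _)) uG MrG).
Qed.
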